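(* Let $\mathcal{D}\subset\mathbb{R}^N$ be open, bounded, connected, and assume the boundary point $y_0\in\partial\mathcal{D}$ is walk-regular. Then for every continuous $F:\partial\mathcal{D}\to\mathbb{R}$, the functions $u^\epsilon(x)=\mathbb{E}[F\circ X^{\epsilon,x}]$ satisfy: for every $\eta>0$ there exist $\hat\delta>0$ and $\hat\epsilon\in(0,1)$ such that $|u^\epsilon(x_0)-F(y_0)|\le\eta$ for all $\epsilon\in(0,\hat\epsilon)$ and all $x_0\in B_{\hat\delta}(y_0)\cap\mathcal{D}$.
   Context: Probability space: $\Omega_1=B_1(0)\subset\mathbb{R}^N$ with Borel $\sigma$-algebra and normalised Lebesgue measure; $(\Omega,\mathcal{F},\mathbb{P})$ is the countable product $\Omega=(\Omega_1)^{\mathbb{N}}$, $\omega=\{w_i\}_{i\ge1}$. The $\epsilon$-ball walk started at $x\in\mathcal{D}$: $X_0^{\epsilon,x}\equiv x$, $X_n^{\epsilon,x}=X_{n-1}^{\epsilon,x}+\big(\epsilon\wedge\operatorname{dist}(X_{n-1}^{\epsilon,x},\partial\mathcal{D})\big)w_n$ for $n\ge1$; it converges $\mathbb{P}$-a.s. to a random variable $X^{\epsilon,x}:\Omega\to\partial\mathcal{D}$. A point $y_0\in\partial\mathcal{D}$ is walk-regular if for every $\eta,\delta>0$ there exist $\hat\delta\in(0,\delta)$ and $\hat\epsilon\in(0,1)$ such that $\mathbb{P}(X^{\epsilon,x_0}\in B_\delta(y_0))\ge1-\eta$ for all $\epsilon\in(0,\hat\epsilon)$ and all $x_0\in B_{\hat\delta}(y_0)\cap\mathcal{D}$.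 *)

From HB Require Import structures.
From mathcomp Require Import all_boot all_order all_algebra.
From mathcomp Require Import all_classical all_reals all_analysis.
Set Implicit Arguments. Unset Strict Implicit. Unset Printing Implicit Defensive.
Import Order.TTheory GRing.Theory Num.Theory.
Import numFieldNormedType.Exports.
Local Open Scope classical_set_scope.
Local Open Scope ring_scope.

Section Defs.
Variables (R : realType) (N : nat).

(* Euclidean norm on R^N (the library norm on matrices is the max norm). *)
Definition enorm (x : 'rV[R]_N) : R := Num.sqrt (\sum_(i < N) x ord0 i ^+ 2).

Definition eball (c : 'rV[R]_N) (r : R) : set 'rV[R]_N :=
  [set x | enorm (x - c) < r].

Definition bdry (D : set 'rV[R]_N) : set 'rV[R]_N := closure D `\` interior D.

Definition edist (x : 'rV[R]_N) (A : set 'rV[R]_N) : R :=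
  inf [set enorm (x - y) | y in A].

Definition borelN : set (set 'rV[R]_N) := <<s open >>.

(* The epsilon-ball walk driven by w : nat -> 'rV_N
   (w n plays the role of w_{n+1}). *)
Fixpoint ball_walk (D : set 'rV[R]_N) (eps : R) (x : 'rV[R]_N)
    (w : nat -> 'rV[R]_N) (n : nat) : 'rV[R]_N :=
  match n with
  | 0 => x
  | n'.+1 => let y := ball_walk D eps x w n' in
             y + (Num.min eps (edist y (bdry D))) *: w n'
  end.

End Defs.

(* N-dimensional Lebesgue integral of a nonnegative function, as an iterated
   one-dimensional Lebesgue integral (Tonelli). *)
Fixpoint leb_iint {R : realType} (n : nat) : ('rV[R]_n -> \bar R) -> \bar R :=
  match n with
  | 0 => fun f => f 0
  | n'.+1 => fun f =>
      (\int[@lebesgue_measure R]_(t in [set: R])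
         leb_iint (fun v : 'rV[R]_n' =>
           f (\row_(i < n'.+1) (if unlift ord0 i is Some j then v ord0 j else t))))%E
  end.

Definition volN {R : realType} (N : nat) (A : set 'rV[R]_N) : \bar R :=
  leb_iint (fun v => (\1_A v)%:E).

Definition unif_ball {R : realType} (N : nat) (A : set 'rV[R]_N) : R :=
  fine (volN (A `&` eball 0 1)) / fine (volN (eball (0 : 'rV[R]_N) 1)).

(* w is an i.i.d. sequence of random vectors uniformly distributed on B_1(0):
   joint law of (w_0,...,w_{n-1}) is the product of uniform laws. *)
Definition iid_unif_ball {R : realType} (N : nat) {d : measure_display}
    {T : measurableType d} (P : probability T R) (w : nat -> T -> 'rV[R]_N) :=
  (forall n A, borelN A -> measurable (w n @^-1` A)) /\
  (forall (n : nat) (A : nat -> set 'rV[R]_N), (forall i, borelN (A i)) ->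
     P (\bigcap_(i in [set i | (i < n)%N]) (w i @^-1` A i))
     = (\prod_(i < n) unif_ball (A i))%:E).

(* X eps x is (a version of) the a.s. limit X^{eps,x} of the eps-ball walk
   started at x: a boundary-valued random variable. *)
Definition walk_limit {R : realType} (N : nat) {d : measure_display}
    {T : measurableType d} (P : probability T R) (D : set 'rV[R]_N)
    (w : nat -> T -> 'rV[R]_N) (X : R -> 'rV[R]_N -> T -> 'rV[R]_N) :=
  forall (eps : R) (x : 'rV[R]_N), 0 < eps -> D x ->
    (forall om, bdry D (X eps x om)) /\
    (forall A, borelN A -> measurable (X eps x @^-1` A)) /\
    {ae P, forall om, ball_walk D eps x (fun n => w n om) n @[n --> \oo]
                      --> X eps x om}.

Definition walk_regular {R : realType} (N : nat) {d : measure_display}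
    {T : measurableType d} (P : probability T R) (D : set 'rV[R]_N)
    (X : R -> 'rV[R]_N -> T -> 'rV[R]_N) (y0 : 'rV[R]_N) :=
  forall eta delta : R, 0 < eta -> 0 < delta ->
    exists dh : R, (0 < dh < delta) /\ exists eh : R, (0 < eh < 1) /\
      forall (eps : R) (x0 : 'rV[R]_N), 0 < eps < eh ->
        (eball y0 dh `&` D) x0 ->
        ((1 - eta)%:E <= P (X eps x0 @^-1` eball y0 delta))%E.

Definition u_eps {R : realType} (N : nat) {d : measure_display}
    {T : measurableType d} (P : probability T R)
    (X : R -> 'rV[R]_N -> T -> 'rV[R]_N) (F : 'rV[R]_N -> R)
    (eps : R) (x : 'rV[R]_N) : \bar R :=
  (\int[P]_(om in [set: T]) (F (X eps x om))%:E)%E.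

From HB Require Import structures.
From mathcomp Require Import all_boot all_order all_algebra.
From mathcomp Require Import all_classical all_reals all_analysis.
From mathcomp Require Import measurable_realfun.
From mathcomp Require Import ring lra.
Import Order.TTheory GRing.Theory Num.Theory.
Import numFieldNormedType.Exports.
Local Open Scope classical_set_scope.
Local Open Scope ring_scope.

(* F is bounded by some M on the compact boundary and continuous at y0, so
   |F(y) - F(y0)| <= eta/2 for boundary points y in a ball B_delta(y0).  Walk-regularity
   bounds the probability that X^{eps,x0} leaves B_delta(y0) by eta/(4M) for x0 close to
   y0 and eps small; on that event |F(X) - F(y0)| <= 2M, which gives
   |u^eps(x0) - F(y0)| <= eta/2 + 2M * eta/(4M) = eta.
   The law of the walk, openness and connectedness of D enter only through
   walk-regularity; of walk_limit only the boundary values and measurability of X are used. *)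

Section EuclideanNorm.
Context {R : realType} {N : nat}.
Implicit Types (x c : 'rV[R]_N) (r : R).

Lemma continuous_enorm : continuous (@enorm R N).
Proof.
move=> x; apply: continuous_comp; last exact: sqrt_continuous.
apply: (@continuous_big R 'I_N +%R 0 xpredT add_continuous _ (index_enum _)
  (fun i (y : 'rV[R]_N) => y ord0 i ^+ 2)) => i _ y.
have coord_y := @coord_continuous R 1 N ord0 i y.
rewrite (_ : (fun y => _) = (fun y : 'rV[R]_N => y ord0 i * y ord0 i)).
  exact: (cvgM coord_y coord_y).
by apply/funext => z; rewrite expr2.
Qed.

Lemma eball_open c r : open (eball c r).
Proof.
have -> : eball c r = (fun x => enorm (x - c)) @^-1` `]-oo, r[.
  by apply/seteqP; split => x /=; rewrite /eball /= in_itv.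
apply: open_comp; last exact: itv_open_ends_open.
move=> x _; apply: continuous_comp; last exact: continuous_enorm.
by apply: continuousB; [exact: cvg_id | exact: cst_continuous].
Qed.

Lemma mx_norm_le_enorm x : `|x| <= enorm x.
Proof.
rewrite [leLHS]/Num.norm /= mx_normrE; apply: bigmax_le => [|[i j] _].
  exact: sqrtr_ge0.
rewrite /enorm [i]ord1 /= -sqrtr_sqr; apply: ler_wsqrtr.
by rewrite (bigD1 j) //= lerDl; apply: sumr_ge0 => k _; exact: sqr_ge0.
Qed.

End EuclideanNorm.

Lemma bdry_closed {R : realType} {N : nat} (D : set 'rV[R]_N) : closed (bdry D).
Proof.
apply: closedI; first exact: closed_closure.
by rewrite closedC; exact: open_interior.
Qed.

Lemma bdry_compact {R : realType} {N : nat} {D : set 'rV[R]_N} :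
  bounded_set D -> compact (bdry D).
Proof.
move=> Dbd; apply: bounded_closed_compact; last exact: bdry_closed.
have [M M0 DM] := ex_strict_bound_gt0 Dbd.
pose ball_M := (fun x : 'rV[R]_N => `|x|) @^-1` [set r | r <= M].
have closed_ball_M : closed ball_M.
  apply: preimage_closed; last exact: closed_le.
  by move=> x _; exact: norm_continuous.
have bdry_ball_M : bdry D `<=` ball_M.
  move=> x [xD _]; rewrite [ball_M](closure_id _).1 //.
  by apply: closureS xD => z /DM /ltW.
exists M; split; first exact: num_real.
by move=> M' MM' x /bdry_ball_M /le_trans; apply; exact: ltW.
Qed.

Lemma compact_continuous_bounded {R : realType} {T : topologicalType}
    {A : set T} {F : T -> R} :
  compact A -> {within A, continuous F} ->
  exists2 M, 0 < M & forall y, A y -> `|F y| <= M.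
Proof.
move=> cA cF.
have [M M0 FM] := ex_strict_bound_gt0 (compact_bounded (continuous_compact cF cA)).
by exists M => // y Ay; apply/ltW/FM; exists y.
Qed.

Lemma continuous_within_eball {R : realType} {N : nat} {A : set 'rV[R]_N}
    {F : 'rV[R]_N -> R} {y0 : 'rV[R]_N} {e : R} :
  {within A, continuous F} -> A y0 -> 0 < e ->
  exists2 r, 0 < r & forall y, A y -> eball y0 r y -> `|F y - F y0| <= e.
Proof.
move=> cF Ay0 e0.
have /cvgrPdist_le/(_ e e0) := (subspace_continuousP A F).1 cF y0 Ay0.
rewrite near_withinE => /nbhs_ballP[r r0 Fr]; exists r => // y Ay y0ry.
rewrite distrC; apply: Fr => //.
rewrite mx_norm_ball /ball_ /= distrC.
exact: (le_lt_trans (mx_norm_le_enorm _) y0ry).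
Qed.

Lemma measurable_within_continuous_comp {R : realType} {N : nat}
    {d : measure_display} {T : measurableType d} {A : set 'rV[R]_N}
    {F : 'rV[R]_N -> R} {Y : T -> 'rV[R]_N} :
  {within A, continuous F} -> (forall om, A (Y om)) ->
  (forall V, open V -> measurable (Y @^-1` V)) ->
  measurable_fun setT (F \o Y).
Proof.
move=> cF AY mY.
apply: (measurability _ (RGenOInfty.measurableE R)) => _ [_ [x ->] <-].
have : open (F @^-1` `]x, +oo[%classic : set (subspace A)).
  by move/continuousP: cF; apply; exact: itv_open_ends_open.
case/open_subspaceP => V oV VA.
suff -> : setT `&` (F \o Y) @^-1` `]x, +oo[%classic = Y @^-1` V by exact: mY.
apply/seteqP; split => om /=.
- by move=> [_ FYx]; have : (F @^-1` `]x, +oo[%classic `&` A) (Y om) by [];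
    rewrite -VA => -[].
- by move=> VY; have : (V `&` A) (Y om) by []; rewrite VA => -[].
Qed.

Section BoundedExpectation.
Local Open Scope ereal_scope.

Lemma abse_integral_sub_cst_le {d} {T : measurableType d} {R : realType}
    (P : probability T R) {f : T -> R} {E : set T} {c e M : R} :
  measurable_fun setT f -> measurable E ->
  (forall om, (`|f om| <= M)%R) -> (`|c| <= M)%R -> (0 <= e)%R ->
  (forall om, E om -> (`|f om - c| <= e)%R) ->
  `|\int[P]_(om in setT) (f om)%:E - c%:E| <= e%:E + (2 * M)%:E * P (~` E).
Proof.
move=> mf mE fM cM e0 fE.
have M0 : (0 <= M)%R := le_trans (normr_ge0 c) cM.
have finP : P setT < +oo by rewrite probability_setT ltry.
have bounded_integrable (g : T -> R) (B : R) : measurable_fun setT g ->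
    (forall om, (`|g om| <= B)%R) -> P.-integrable setT (EFin \o g).
  move=> mg gB; apply: measurable_bounded_integrable => //.
  exists B; split; first exact: num_real.
  by move=> B' BB' om _; exact: (le_trans (gB om) (ltW BB')).
have int_cst : \int[P]_(om in setT) c%:E = c%:E.
  by rewrite integral_cst //= probability_setT mule1.
have mfc : measurable_fun setT (fun om => f om - c)%R by exact: measurable_funB.
have mCE : measurable (~` E) by exact: measurableC.
have m1CE : measurable_fun setT (fun om => (2 * M)%:E * (\1_(~` E) om)%:E).
  by apply: emeasurable_funM => //; exact/measurable_EFinP/measurable_indic.
rewrite -{1}int_cst -integralB_EFin //; last first.
- exact: (bounded_integrable _ _ (measurable_cst c) (fun=> lexx `|c|%R)).
- exact: bounded_integrable mf fM.
apply: le_trans (le_abse_integral _ _ _) _ => //; first exact/measurable_EFinP.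
have split_bound om : (`|f om - c| <= e + 2 * M * \1_(~` E) om)%R.
  rewrite indicE; case: (boolP (om \in ~` E)) => [_ | /negP omE] /=.
    by apply: le_trans (ler_normB _ _) _; have := fM om; lra.
  have /fE : E om by apply: contrapT => ?; apply: omE; rewrite inE.
  by rewrite mulr0 addr0.
have integral_bound : \int[P]_(om in setT) `|f om - c|%:E <=
    \int[P]_(om in setT) (e%:E + (2 * M)%:E * (\1_(~` E) om)%:E).
  apply: ge0_le_integral => //.
  - exact/measurable_EFinP/measurableT_comp.
  - exact: emeasurable_funD.
  - by move=> om _; rewrite -EFinM -EFinD lee_fin.
apply: le_trans integral_bound _.
rewrite ge0_integralD //; last first.
  by move=> om _; rewrite -EFinM lee_fin mulr_ge0 ?mulr_ge0.
rewrite integral_cst //= probability_setT mule1 ge0_integralZl //.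
- by rewrite integral_indic // setIT.
- exact/measurable_EFinP/measurable_indic.
- by rewrite lee_fin mulr_ge0.
Qed.

End BoundedExpectation.

Theorem lemma2p13 (R : realType) (N : nat) (d : measure_display)
    (T : measurableType d) (P : probability T R)
    (w : nat -> T -> 'rV[R]_N) (D : set 'rV[R]_N)
    (X : R -> 'rV[R]_N -> T -> 'rV[R]_N) (y0 : 'rV[R]_N) :
  iid_unif_ball P w ->
  walk_limit P D w X ->
  open D -> bounded_set D -> connected D ->
  bdry D y0 ->
  walk_regular P D X y0 ->
  forall F : 'rV[R]_N -> R, {within bdry D, continuous F} ->
  forall eta : R, 0 < eta ->
    exists dh : R, 0 < dh /\ exists eh : R, (0 < eh < 1) /\
      forall (eps : R) (x0 : 'rV[R]_N), 0 < eps < eh ->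
        (eball y0 dh `&` D) x0 ->
        (`| u_eps P X F eps x0 - (F y0)%:E | <= eta%:E)%E.
Proof.
move=> _ X_limit _ D_bounded _ y0_bdry y0_regular F F_cont eta eta_gt0.
have [M M_gt0 FM] := compact_continuous_bounded (bdry_compact D_bounded) F_cont.
have eta_half_gt0 : 0 < eta / 2 by rewrite divr_gt0.
have [delta delta_gt0 F_delta] :=
  continuous_within_eball F_cont y0_bdry eta_half_gt0.
pose eta' := eta / (4 * M).
have eta'_gt0 : 0 < eta' by rewrite divr_gt0 // mulr_gt0.
have [dh [/andP[dh_gt0 _] [eh [eh01 regular_at]]]] :=
  y0_regular eta' delta eta'_gt0 delta_gt0.
exists dh; split => //; exists eh; split => // eps x0 eps_eh x0_dh.
have [X_bdry [X_meas _]] := X_limit eps x0 (andP eps_eh).1 x0_dh.2.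
have X_open_meas V : open V -> measurable (X eps x0 @^-1` V).
  by move=> oV; apply: X_meas; exact: sub_sigma_algebra.
pose E := X eps x0 @^-1` eball y0 delta.
have mE : measurable E := X_open_meas _ (eball_open y0 delta).
have PCE : (P (~` E) <= eta'%:E)%E.
  have := regular_at eps x0 eps_eh x0_dh.
  rewrite probability_setC // -(fineK (fin_num_measure P _ mE)) !lee_fin.
  lra.
apply: le_trans (abse_integral_sub_cst_le P
  (measurable_within_continuous_comp F_cont X_bdry X_open_meas) mE
  (fun om => FM _ (X_bdry om)) (FM _ y0_bdry) (ltW eta_half_gt0)
  (fun om => F_delta _ (X_bdry om))) _.
have eta_split : eta / 2 + 2 * M * eta' = eta.
  by rewrite /eta'; field; exact: lt0r_neq0.
rewrite -[in leRHS]eta_split EFinD leeD2l // [(2 * M * _)%:E]EFinM.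
by rewrite lee_pmul2l // lte_fin mulr_gt0.
Qed.
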